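(* Let $G$ be the graph defined in the context. Then $G$ does not contain an induced subgraph isomorphic to $P_6$.
   Context: $P_n$ denotes the path on $n$ vertices. Let $\mathbb{F}=\mathbb{F}_2[\alpha]/(\alpha^4+\alpha+1)$ be the field with 16 elements. Let $S=\{x^3: x\in\mathbb{F}^\times\}=\{1,\alpha^3,\alpha^2+\alpha^3,\alpha+\alpha^3,1+\alpha+\alpha^2+\alpha^3\}$ be the set of nonzero cubes. Let $G$ be the graph with vertex set $\mathbb{F}$ in which distinct $x,y$ are adjacent if and only if $x-y\in S$. *)

From mathcomp Require Import all_boot.
Set Implicit Arguments. Unset Strict Implicit. Unset Printing Implicit Defensive.

(* GF(16) = F_2[alpha]/(alpha^4 + alpha + 1), elements represented by their
   coefficient vectors (a0,a1,a2,a3) meaning a0 + a1 alpha + a2 alpha^2 + a3 alpha^3. *)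
Definition GF16 : finType := (bool * bool * bool * bool)%type.

Definition gf_zero : GF16 := (false, false, false, false).
Definition gf_one : GF16 := (true, false, false, false).
Definition gf_alpha : GF16 := (false, true, false, false).

Definition gf_add (x y : GF16) : GF16 :=
  let: (a0, a1, a2, a3) := x in
  let: (b0, b1, b2, b3) := y in
  (addb a0 b0, addb a1 b1, addb a2 b2, addb a3 b3).

Definition gf_opp (x : GF16) : GF16 :=
  let: (a0, a1, a2, a3) := x in (a0, a1, a2, a3).
Definition gf_sub (x y : GF16) : GF16 := gf_add x (gf_opp y).

(* multiplication by alpha, using alpha^4 = alpha + 1 *)
Definition gf_mul_alpha (x : GF16) : GF16 :=
  let: (a0, a1, a2, a3) := x in (a3, addb a0 a3, a1, a2).

Definition gf_scale (b : bool) (x : GF16) : GF16 := if b then x else gf_zero.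

Definition gf_mul (x y : GF16) : GF16 :=
  let: (b0, b1, b2, b3) := y in
  let x1 := gf_mul_alpha x in
  let x2 := gf_mul_alpha x1 in
  let x3 := gf_mul_alpha x2 in
  gf_add (gf_scale b0 x)
    (gf_add (gf_scale b1 x1) (gf_add (gf_scale b2 x2) (gf_scale b3 x3))).

Definition gf_cube (x : GF16) : GF16 := gf_mul x (gf_mul x x).

Definition cubes : {set GF16} := [set gf_cube x | x in [set y | y != gf_zero]].

Definition G_adj : rel GF16 := fun x y => (x != y) && (gf_sub x y \in cubes).

Definition induced_P6 (V : finType) (e : rel V) (f : 'I_6 -> V) : Prop :=
  injective f /\
  forall i j : 'I_6, e (f i) (f j) = ((i.+1 == j :> nat) || (j.+1 == i :> nat)).

From mathcomp Require Import all_boot.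

Set Implicit Arguments.
Unset Strict Implicit.
Unset Printing Implicit Defensive.

(* G is a Cayley graph on the 16 elements of GF(16), so the absence of an
   induced P_6 is a finite fact, which we establish by a certified search.
   - First the connection set is made explicit: the nonzero cubes of GF(16)
     are exactly the five elements listed in the statement, hence adjacency
     in G is a cheap boolean test.
   - Then, for an arbitrary graph given by a relation e, we define a
     depth-first search that grows induced paths one vertex at a time,
     always appending a neighbour of the last vertex that is new and not
     adjacent to any earlier vertex.  Soundness: every induced path on
     n.+1 vertices is found by the search started at its first vertex.
   - Finally the search, run from each of the 16 vertices of G, finds no
     induced path on 6 vertices; this is checked by evaluation. *)

Section InducedPathSearch.

Variables (V : eqType) (e : rel V).

Definition is_induced_path {n} (f : 'I_n -> V) : Prop :=
  injective f /\
  forall i j : 'I_n, e (f i) (f j) = ((i.+1 == j :> nat) || (j.+1 == i :> nat)).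

(* A partial path is stored last-vertex-first.  The vertex y may be appended
   to it when y is new, adjacent to the last vertex and to no other one. *)
Definition extends (s : seq V) (y : V) : bool :=
  (y \notin s) && (if s is x :: r then e x y && all (fun z => ~~ e z y) r else true).

Variable vs : seq V.

Fixpoint grow (k : nat) (s : seq V) : bool :=
  if k is k'.+1 then has (fun y => grow k' (y :: s)) [seq y <- vs | extends s y]
  else true.

Section Soundness.

Variables (n : nat) (f : 'I_n.+1 -> V).
Hypotheses (f_path : is_induced_path f) (f_vs : forall i, f i \in vs).

Let g (i : nat) : V := f (inord i).

Fixpoint prefix (k : nat) : seq V :=
  if k is k'.+1 then g k' :: prefix k' else [::].

Lemma mem_prefix z k : z \in prefix k -> exists2 i, i < k & z = g i.
Proof.
elim: k => [|k IHk] //=; rewrite inE => /orP[/eqP-> | /IHk[i lt_ik ->]].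
  by exists k.
by exists i; first exact: ltnW.
Qed.

Lemma g_inj {i j} : i <= n -> j <= n -> g i = g j -> i = j.
Proof.
move=> le_in le_jn /(proj1 f_path)/(congr1 val).
by rewrite /= !inordK.
Qed.

Lemma g_adj i j : i <= n -> j <= n -> e (g i) (g j) = (i.+1 == j) || (j.+1 == i).
Proof. by move=> le_in le_jn; rewrite (proj2 f_path) /= !inordK. Qed.

Lemma prefix_extends k : k < n -> extends (prefix k.+1) (g k.+1).
Proof.
move=> lt_kn; apply/andP; split.
  apply/negP=> /mem_prefix[i lt_ik eq_g].
  have le_in : i <= n := ltnW (leq_trans lt_ik lt_kn).
  by move: lt_ik; rewrite -(g_inj lt_kn le_in eq_g) ltnn.
rewrite /= g_adj ?eqxx //; last exact: ltnW.
apply/allP=> z /mem_prefix[i lt_ik ->].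
rewrite g_adj ?(leq_trans (ltnW lt_ik)) ?(ltnW lt_kn) //.
by rewrite eqSS (ltn_eqF lt_ik) (gtn_eqF (leqW (leqW lt_ik))).
Qed.

Lemma grow_prefix m k : k + m = n -> grow m (prefix k.+1).
Proof.
elim: m k => [|m IHm] k eq_n //=.
have lt_kn : k < n by rewrite -eq_n -addSnnS leq_addr.
apply/hasP; exists (g k.+1); last by apply: IHm; rewrite addSnnS.
by rewrite mem_filter prefix_extends ?f_vs.
Qed.

Lemma induced_path_grow : grow n [:: f ord0].
Proof.
have -> : f ord0 = g 0 by congr f; apply/val_inj; rewrite /= inordK.
exact: grow_prefix.
Qed.

End Soundness.

End InducedPathSearch.

Definition gf_elems : seq GF16 :=
  [:: (true,true,true,true); (true,true,true,false); (true,true,false,true);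
      (true,true,false,false); (true,false,true,true); (true,false,true,false);
      (true,false,false,true); (true,false,false,false); (false,true,true,true);
      (false,true,true,false); (false,true,false,true); (false,true,false,false);
      (false,false,true,true); (false,false,true,false); (false,false,false,true);
      (false,false,false,false)].

Lemma mem_gf_elems (x : GF16) : x \in gf_elems.
Proof. by case: x => [[[[] []] []] []]. Qed.

Definition cube_list : seq GF16 :=
  [:: (true,false,false,false); (false,false,false,true); (false,false,true,true);
      (false,true,false,true); (true,true,true,true)].

(* The elements of S are the cubes of 1, a, a^2, a^3 and a^4 = 1 + a. *)
Definition cube_roots : seq GF16 :=
  [:: gf_one; gf_alpha; (false,false,true,false); (false,false,false,true);
      (true,true,false,false)].

Lemma cube_listE : cube_list = map gf_cube cube_roots.
Proof. by []. Qed.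

Lemma mem_cubes x : (x \in cubes) = (x \in cube_list).
Proof.
apply/imsetP/idP => [[y] | ].
  by rewrite inE => + ->; case: y => [[[[] []] []] []].
rewrite cube_listE => /mapP[y y_root ->]; exists y => //.
by move: y_root; rewrite inE; apply: contraTneq => ->.
Qed.

Definition G_adj_list (x y : GF16) : bool := (x != y) && (gf_sub x y \in cube_list).

Lemma G_adjE : G_adj =2 G_adj_list.
Proof. by move=> x y; rewrite /G_adj /G_adj_list mem_cubes. Qed.

Lemma no_induced_P6_search :
  all (fun x => ~~ grow G_adj_list gf_elems 5 [:: x]) gf_elems.
Proof. by vm_compute. Qed.

Theorem claim1 : ~ exists f : 'I_6 -> GF16, induced_P6 G_adj f.
Proof.
case=> f [f_inj f_adj].
have f_path : is_induced_path G_adj_list f.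
  by split=> // i j; rewrite -G_adjE.
have /allP/(_ (f ord0) (mem_gf_elems _)) := no_induced_P6_search.
by rewrite (induced_path_grow f_path (fun i => mem_gf_elems (f i))).
Qed.
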